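(* For every $n\geq0$ and every finite field $\mathbb{F}_q$, $\sum_{\alpha\in\mathbb{F}_q^*}N_{\mathbb{A}_n}(\alpha)=\frac{q^{n+2}+(-1)^{n+1}}{q+1}$, and this is the number of $\mathbb{F}_q$-points of $Y_{\mathbb{A}_n}$.
   Context: For $\alpha$ invertible and $n\ge1$, $X_n(\alpha)$ is the affine variety in variables $x_1,\dots,x_n,x'_1,\dots,x'_n$ defined by $x_1x'_1=1+\alpha x_2$, $x_ix'_i=1+x_{i-1}x_{i+1}$ for $2\le i\le n-1$, $x_nx'_n=1+x_{n-1}$ (for $n=1$: $x_1x'_1=1+\alpha$); $X_0(\alpha)$ is a point. $N_{\mathbb{A}_n}(\alpha)$ is the number of $\mathbb{F}_q$-points of $X_n(\alpha)$. $Y_{\mathbb{A}_n}$ is the variety in variables $(\alpha,x_1,\dots,x_n,x'_1,\dots,x'_n)$ with $\alpha\neq0$ defined by the same equations (the union of all $X_n(\alpha)$, $\alpha$ invertible); by convention $Y_{\mathbb{A}_0}=\mathbb{A}^1\setminus\{0\}$. *)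

From HB Require Import structures.
From mathcomp Require Import all_boot all_order all_algebra all_field.
Set Implicit Arguments. Unset Strict Implicit. Unset Printing Implicit Defensive.
Import Order.TTheory GRing.Theory Num.Theory.
Local Open Scope ring_scope.

(* Variables x_1..x_n are indexed by i : 'I_n (0-based: x i = x_{i+1}).
   ext_seq alpha x = [:: alpha; x_1; ...; x_n; 1].
   The defining equation number i (0-based) is
     x_{i+1} x'_{i+1} = 1 + (ext_seq)_i * (ext_seq)_{i+2},
   which gives x_1x'_1 = 1 + alpha x_2, x_ix'_i = 1 + x_{i-1}x_{i+1},
   x_nx'_n = 1 + x_{n-1}, and x_1x'_1 = 1 + alpha when n = 1. *)
Definition ext_seq (F : nzRingType) (n : nat) (alpha : F) (x : {ffun 'I_n -> F})
  : seq F := alpha :: rcons [seq x i | i : 'I_n] 1.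

Definition XA_eqs (F : nzRingType) (n : nat) (alpha : F)
  (x x' : {ffun 'I_n -> F}) : bool :=
  [forall i : 'I_n,
     x i * x' i == 1 + (ext_seq alpha x)`_i * (ext_seq alpha x)`_(i.+2)].

Definition N_A (F : finFieldType) (n : nat) (alpha : F) : nat :=
  #|[set p : {ffun 'I_n -> F} * {ffun 'I_n -> F} | XA_eqs alpha p.1 p.2]|.

Definition Y_A_card (F : finFieldType) (n : nat) : nat :=
  #|[set t : F * ({ffun 'I_n -> F} * {ffun 'I_n -> F}) |
      (t.1 != 0) && XA_eqs t.1 t.2.1 t.2.2]|.

From HB Require Import structures.
From mathcomp Require Import all_boot all_order all_algebra all_field.
From mathcomp Require Import ring.
Set Implicit Arguments. Unset Strict Implicit. Unset Printing Implicit Defensive.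
Import Order.TTheory GRing.Theory Num.Theory.
Local Open Scope ring_scope.

(* Let M_n(u, v) count the points of the chain x_1, ..., x_n with boundary
   values x_0 = u and x_{n+1} = v, so that N_{A_n}(alpha) = M_n(alpha, 1).
   Split on x_1 when n >= 2 and u != 0: if x_1 != 0, then x'_1 is forced and
   the remaining chain has boundary x_1; if x_1 = 0, then 1 + u x_2 = 0 forces
   x_2 = -1/u != 0, x'_1 is free and x'_2 = 1/x_2 is forced. Hence
     M_{n+2}(u, v) = sum_{y != 0} M_{n+1}(y, v) + q M_n(-1/u, v),
   and since u |-> -1/u permutes F^*, Y_n = sum_{u != 0} M_n(u, 1) satisfies
   Y_{n+2} = (q - 1) Y_{n+1} + q Y_n with Y_0 = q - 1, Y_1 = (q - 1)^2 + q,
   whose solution is (q^{n+2} + (-1)^{n+1}) / (q + 1). *)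

Section SumSeq.
Variable T : finType.

Fixpoint sumseq (n : nat) (G : seq T -> nat) : nat :=
  if n is n'.+1 then (\sum_(y : T) sumseq n' (fun s => G (y :: s)))%N
  else G [::].

Lemma eq_sumseq n (G H : seq T -> nat) : G =1 H -> sumseq n G = sumseq n H.
Proof.
elim: n G H => [|n IHn] G H eqGH /=; first exact: eqGH.
by apply: eq_bigr => y _; apply: IHn => s.
Qed.

Lemma sumseq_distrr n k (G : seq T -> nat) :
  sumseq n (fun s => k * G s)%N = (k * sumseq n G)%N.
Proof.
elim: n G => [|n IHn] G //=; rewrite big_distrr /=.
by apply: eq_bigr => y _; apply: IHn.
Qed.

Lemma sum_ffun_sumseq n (G : seq T -> nat) :
  (\sum_(x : {ffun 'I_n -> T}) G [seq x i | i : 'I_n])%N = sumseq n G.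
Proof.
elim: n G => [|n IHn] G /=.
  have nil_seq (x : {ffun 'I_0 -> T}) : [seq x i | i : 'I_0] = [::].
    by apply/nilP; rewrite /nilp size_image card_ord.
  under eq_bigr do rewrite nil_seq.
  by rewrite sum_nat_const card_ffun card_ord expn0 mul1n.
under [RHS]eq_bigr do rewrite -(IHn (fun s => G (_ :: s))).
rewrite pair_big /=.
pose cons_ffun (p : T * {ffun 'I_n -> T}) : {ffun 'I_n.+1 -> T} :=
  [ffun i => if unlift ord0 i is Some j then p.2 j else p.1].
rewrite (reindex cons_ffun) /=; last first.
  exists (fun x => (x ord0, [ffun j => x (lift ord0 j)])) => [[a b] _|x _].
    rewrite !ffunE unlift_none; congr pair; apply/ffunP => j.
    by rewrite !ffunE liftK.
  by apply/ffunP => i; rewrite ffunE; case: unliftP => [j ->|->]; rewrite ?ffunE.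
apply: eq_bigr => [[a b]] _.
rewrite /image_mem enum_ordSl /= -map_comp ffunE unlift_none.
by congr (G (_ :: _)); apply: eq_map => j /=; rewrite ffunE liftK.
Qed.

End SumSeq.

Lemma card_set_pair (T1 T2 : finType) (P : T1 -> T2 -> bool) :
  #|[set p : T1 * T2 | P p.1 p.2]| = (\sum_x #|[set y | P x y]|)%N.
Proof.
rewrite -sum1_card (eq_bigl (fun p => P p.1 p.2)) => [|p]; last by rewrite inE.
rewrite -(pair_big_dep xpredT P (fun _ _ => 1%N)).
by apply: eq_bigr => x _; rewrite -sum1_card; apply: eq_bigl => y; rewrite inE.
Qed.

Lemma rec2_closed_form (R : comPzRingType) (q : R) (y : nat -> R) :
    y 0%N * (q + 1) = q ^+ 2 - 1 ->
    y 1%N * (q + 1) = q ^+ 3 + 1 ->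
    (forall n, y n.+2 = (q - 1) * y n.+1 + q * y n) ->
  forall n, y n * (q + 1) = q ^+ (n + 2) + (-1) ^+ (n + 1).
Proof.
move=> y0 y1 yS n.
suff [] : y n * (q + 1) = q ^+ (n + 2) + (-1) ^+ (n + 1)
       /\ y n.+1 * (q + 1) = q ^+ (n.+1 + 2) + (-1) ^+ (n.+1 + 1) by [].
elim: n => [|n [IHn IHn1]]; first by rewrite y0 y1; split; ring.
split=> //; rewrite yS mulrDl -!mulrA IHn IHn1 !addSn !exprS; ring.
Qed.

Section ChainCount.
Variable F : finFieldType.

Local Notation q := #|F|.

Definition exchange_count (u x v : F) : nat :=
  #|[pred x' : F | x * x' == 1 + u * v]|.

Lemma exchange_count_unit u x v : x != 0 -> exchange_count u x v = 1%N.
Proof.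
move=> x_nz; rewrite /exchange_count -(card1 (x^-1 * (1 + u * v))).
apply: eq_card => x'; rewrite !inE.
by apply/eqP/eqP => [<-|->]; rewrite mulrA ?mulVf ?mulfV ?mul1r.
Qed.

Lemma exchange_count0 u v :
  exchange_count u 0 v = if 1 + u * v == 0 then q else 0%N.
Proof.
rewrite /exchange_count; case: eqP => uv.
  by apply: eq_card => x'; rewrite !inE mul0r uv eqxx.
by apply: eq_card0 => x'; rewrite !inE mul0r eq_sym; apply/eqP.
Qed.

Fixpoint chain_weight (u : F) (s : seq F) (v : F) : nat :=
  if s is x :: s' then (exchange_count u x (head v s') * chain_weight x s' v)%N
  else 1%N.

Definition chain_count n u v := sumseq n (fun s => chain_weight u s v).

Lemma chain_weight_prod u s v :
  let e := u :: rcons s v in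
  chain_weight u s v =
  (\prod_(0 <= i < size s) exchange_count (e`_i)%R (e`_i.+1)%R (e`_i.+2)%R)%N.
Proof.
rewrite /=; elim: s u => [|x s IHs] u /=; first by rewrite big_geq.
by rewrite big_nat_recl //= IHs; case: s {IHs}.
Qed.

Lemma chain_count1 u v :
  chain_count 1 u v = (q.-1 + if (1 + u * v == 0)%R then q else 0)%N.
Proof.
rewrite /chain_count /= (bigD1 0) //= addnC muln1 exchange_count0; congr addn.
under eq_bigr => x x_nz do rewrite muln1 exchange_count_unit //.
by rewrite sum_nat_const muln1 cardC1.
Qed.

Lemma chain_countSS n u v : u != 0 ->
  chain_count n.+2 u v =
  (\sum_(x | (x != 0)%R) chain_count n.+1 x v + q * chain_count n (- u^-1) v)%N.
Proof.
move=> u_nz; rewrite /chain_count /= (bigD1 0) //= addnC; congr addn.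
  apply: eq_bigr => x x_nz; apply: eq_bigr => z _; apply: eq_sumseq => s /=.
  by rewrite exchange_count_unit // mul1n.
have x2_forced z : (1 + u * z == 0) = (z == - u^-1).
  rewrite addrC addr_eq0; apply/eqP/eqP => [uz|->]; last by rewrite mulrN mulfV.
  by rewrite -(mulKf u_nz z) uz mulrN1.
rewrite (bigD1 (- u^-1)) //= big1 ?addn0 => [|z].
  rewrite -sumseq_distrr; apply: eq_sumseq => s /=.
  rewrite exchange_count0 x2_forced eqxx exchange_count_unit ?mul1n //.
  by rewrite oppr_eq0 invr_eq0.
move=> /negbTE z_ne; rewrite (@eq_sumseq _ _ _ (fun=> 0 * 0)%N) => [|s].
  by rewrite sumseq_distrr mul0n.
by rewrite /= exchange_count0 x2_forced z_ne.
Qed.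

Definition total_count n := (\sum_(u | (u != 0)%R) chain_count n u 1%R)%N.

Lemma card_nonzero : #|[pred u : F | u != 0]| = q.-1.
Proof. by rewrite -(cardC1 0); apply: eq_card => u; rewrite !inE. Qed.

Lemma total_count0 : total_count 0 = q.-1.
Proof. by rewrite /total_count sum_nat_const muln1 card_nonzero. Qed.

Lemma total_count1 : total_count 1 = (q.-1 * q.-1 + q)%N.
Proof.
rewrite /total_count.
under eq_bigr do rewrite chain_count1 mulr1 addrC addr_eq0.
rewrite big_split /= sum_nat_const card_nonzero; congr addn.
rewrite (bigD1 (-1)) ?oppr_eq0 ?oner_eq0 //= eqxx big1 ?addn0 //.
by move=> u /andP[_ /negbTE ->].
Qed.

Lemma total_countSS n :
  total_count n.+2 = (q.-1 * total_count n.+1 + q * total_count n)%N.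
Proof.
rewrite /total_count (eq_bigr _ (fun u u_nz => chain_countSS n 1 u_nz)).
rewrite big_split /= sum_nat_const card_nonzero -big_distrr /=.
congr (_ + _ * _)%N.
have inv_opp_inj : injective (fun u : F => - u^-1).
  by move=> a b /oppr_inj /invr_inj.
rewrite (reindex_inj inv_opp_inj) /=.
by apply: eq_big => [u|u _]; rewrite ?oppr_eq0 ?invr_eq0 // invrN invrK opprK.
Qed.

Lemma total_count_closed_form n :
  ((total_count n)%:R * (q%:R + 1) : rat) = q%:R ^+ (n + 2) + (-1) ^+ (n + 1).
Proof.
have q_pred : (q.-1)%:R = q%:R - 1 :> rat.
  by rewrite -subn1 natrB //; apply/card_gt0P; exists 0.
apply: (rec2_closed_form (y := fun n => (total_count n)%:R)) => [||m].
- by rewrite total_count0 q_pred; ring.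
- by rewrite total_count1 natrD natrM q_pred; ring.
- by rewrite total_countSS natrD !natrM q_pred.
Qed.

Lemma N_A_chain_count n (a : F) : N_A n a = chain_count n a 1.
Proof.
rewrite /N_A card_set_pair /chain_count -sum_ffun_sumseq.
apply: eq_bigr => x _; set s := [seq x i | i : 'I_n].
have size_s : size s = n by rewrite size_image card_ord.
have x_nth (i : 'I_n) : x i = (a :: rcons s 1)`_i.+1.
  by rewrite /= nth_rcons size_s ltn_ord (nth_map i) ?size_enum_ord ?nth_ord_enum.
rewrite chain_weight_prod /= size_s big_mkord.
rewrite (eq_card (B := family (fun i : 'I_n =>
  [pred x' | x i * x' == 1 + (a :: rcons s 1)`_i * (a :: rcons s 1)`_i.+2]))).
  rewrite card_family foldrE big_map big_enum /=.
  by apply: eq_bigr => i _; rewrite /exchange_count x_nth.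
by move=> x'; rewrite inE; apply/forallP/familyP.
Qed.

Lemma Y_A_card_sum n : Y_A_card F n = (\sum_(a : F | (a != 0)%R) N_A n a)%N.
Proof.
rewrite /Y_A_card (card_set_pair (fun (a : F) (p : {ffun _ -> F} * {ffun _ -> F}) =>
  (a != 0) && XA_eqs a p.1 p.2)).
rewrite (bigID (fun a : F => a != 0)) /= [X in (_ + X)%N]big1 ?addn0.
  apply: eq_bigr => a a_nz; rewrite /N_A; apply: eq_card => p.
  by rewrite !inE a_nz.
by move=> a /negbNE a0; apply: eq_card0 => p; rewrite !inE a0.
Qed.

End ChainCount.

Theorem mainTheorem7 (F : finFieldType) (n : nat) :
  ((\sum_(a : F | a != 0) N_A n a)%:R : rat)
    = ((#|F|%:R) ^+ (n + 2) + (-1) ^+ (n + 1)) / (#|F|%:R + 1)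
  /\ (Y_A_card F n = \sum_(a : F | (a != 0)%R) N_A n a)%N.
Proof.
split; last exact: Y_A_card_sum.
under eq_bigr do rewrite N_A_chain_count.
rewrite -/(total_count F n) -total_count_closed_form.
by rewrite mulfK // natr1 pnatr_eq0.
Qed.
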